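(* Let $K\ge 2$, let $s\in(0,1)$, and let $q_1\ge q_2\ge\cdots\ge q_K>0$ satisfy $\sum_{i=1}^K q_i+s=1$. Let $B_1\ge B_2\ge\cdots$ be the base values of all words arranged in non-increasing order, as defined in the context. Put $\alpha_i=\log_{q_1} q_i$, so that $1=\alpha_1\le\alpha_2\le\cdots\le\alpha_K$, and let $R_0>1$ be the unique positive root of $\sum_{i=1}^K X^{-\alpha_i}=1$. Then there is a constant $b\in(0,1)$ such that for every rank $r\ge 1$, $$\frac{b}{R_0}\,B_r^{\log_{q_1}R_0}\;<\;r\;<\;\frac{R_0}{R_0-1}\,B_r^{\log_{q_1}R_0}.$$ Equivalently, writing $-\beta=1/\log_{q_1}R_0=\log q_1/\log R_0$ (so $\beta>0$ and $\beta$ is the solution of $\sum_{i=1}^K q_i^{1/\beta}=1$), there are constants $0<C_1\le C_2$ with $C_1B_r^{-1/\beta}<r<C_2B_r^{-1/\beta}$ for all $r\ge1$.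
   Context: Monkey model: a keyboard has $K$ letters $L_1,\dots,L_K$ struck independently with probabilities $q_1,\dots,q_K$ and a space character with probability $s$. A word is a finite (possibly empty) string $L_{i_1}\cdots L_{i_n}$ of letters ($n\ge0$) followed by a space; it has probability $q_{i_1}\cdots q_{i_n}s$. Its base value is $B=q_{i_1}\cdots q_{i_n}$ (the empty word has base value $1$). The base values of all finitely long words, listed with multiplicity in non-increasing order with ties broken by alphabetical order, are denoted $B_1=1\ge B_2\ge\cdots$; $r$ is called the rank of $B_r$. *)

From Stdlib Require Import Reals List.
Open Scope R_scope.

(* Letters L_1,...,L_K are encoded as the naturals 0,...,K-1 (L_{i+1} ~ i);
   q : nat -> R gives their probabilities (q i = q_{i+1}). *)

(* A word (its letter string, without the trailing space) over a K-letter alphabet. *)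
Definition is_word (K : nat) (w : list nat) : Prop :=
  Forall (fun a => (a < K)%nat) w.

Definition base_value (q : nat -> R) (w : list nat) : R :=
  fold_right (fun a acc => q a * acc) 1 w.

Fixpoint alph_lt (u v : list nat) : Prop :=
  match u, v with
  | nil, _ :: _ => True
  | a :: u', b :: v' => (a < b)%nat \/ (a = b /\ alph_lt u' v')
  | _, _ => False
  end.

Definition precedes (q : nat -> R) (w' w : list nat) : Prop :=
  base_value q w' > base_value q w \/
  (base_value q w' = base_value q w /\ alph_lt w' w).

Definition has_rank (K : nat) (q : nat -> R) (w : list nat) (r : nat) : Prop :=
  exists l : list (list nat),
    NoDup l /\
    (forall w', In w' l <-> (is_word K w' /\ precedes q w' w)) /\
    r = S (length l).

From Stdlib Require Import Reals List Lra Lia FinFun.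
Open Scope R_scope.

(* With [beta = ln R0 / ln q_1 < 0] the weight [phi x = x ^ beta] is self-similar:
   [phi (x / q_i) = phi x * R0 ^ (- alpha_i)], and these factors sum to 1 and are at
   most [1 / R0].  Splitting words by their first letter, the number [N(x)] of words of
   base value at least [x] satisfies [N(x) = 1 + sum_i N(x / q_i)], which by induction on
   the word length gives [N(x) <= (R0 phi(x) - 1) / (R0 - 1)]; the same recursion for
   base values greater than [x] gives at least [(phi(x) - 1) / (K - 1)] such words.
   The word of rank [r] and base value [B] is preceded by every word of base value
   above [B] and by none below it, so [r] lies between the two counts at [x = B]. *)

Lemma ln_le x y : 0 < x -> x <= y -> ln x <= ln y.
Proof.
  intros Hx Hxy; destruct (Rle_lt_or_eq_dec _ _ Hxy) as [Hlt | ->];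
    [left; apply ln_increasing |]; lra.
Qed.

Lemma Rpower_ge_1 x y : 0 < x <= 1 -> y <= 0 -> 1 <= Rpower x y.
Proof.
  intros Hx Hy; unfold Rpower.
  assert (ln x <= 0) by (rewrite <- ln_1; apply ln_le; lra).
  pose proof (exp_ineq1_le (y * ln x)); nra.
Qed.

Lemma Rpower_le_1 x y : 1 <= x -> y <= 0 -> Rpower x y <= 1.
Proof.
  intros Hx Hy; rewrite <- (Rpower_O x) by lra; apply Rle_Rpower; lra.
Qed.

Lemma Rdiv_le_iff x y c : 0 < c -> x / c <= y <-> x <= c * y.
Proof.
  intros Hc; split; intros H.
  - replace x with (c * (x / c)) by (field; lra); apply Rmult_le_compat_l; lra.
  - apply Rmult_le_reg_l with c; [exact Hc |].
    replace (c * (x / c)) with x by (field; lra); exact H.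
Qed.

Lemma Rdiv_lt_iff x y c : 0 < c -> x / c < y <-> x < c * y.
Proof.
  intros Hc; split; intros H.
  - replace x with (c * (x / c)) by (field; lra); apply Rmult_lt_compat_l; lra.
  - apply Rmult_lt_reg_l with c; [exact Hc |].
    replace (c * (x / c)) with x by (field; lra); exact H.
Qed.

Lemma sum_f_R0_ge_first (a : nat -> R) n :
  (forall i, (i <= n)%nat -> 0 <= a i) -> a 0%nat <= sum_f_R0 a n.
Proof.
  induction n as [| n IH]; intros Ha; simpl; [lra |].
  assert (0 <= a (S n)) by (apply Ha; lia).
  assert (a 0%nat <= sum_f_R0 a n) by (apply IH; intros; apply Ha; lia); lra.
Qed.

Lemma sum_f_R0_indicator n j : (j <= n)%nat ->
  sum_f_R0 (fun i => if Nat.eq_dec i j then 1 else 0) n = 1.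
Proof.
  induction n as [| n IH]; intros Hj; cbn [sum_f_R0].
  - destruct (Nat.eq_dec 0 j); [lra | exfalso; lia].
  - destruct (Nat.eq_dec (S n) j) as [<- | Hne].
    + rewrite (sum_eq _ (fun _ => 0)), sum_cte by
        (intros i Hi; destruct (Nat.eq_dec i (S n)); [lia | reflexivity]); lra.
    + rewrite IH by lia; lra.
Qed.

Lemma alph_lt_irrefl u : ~ alph_lt u u.
Proof. induction u as [| a u IH]; simpl; [tauto |]; intros [H | [_ H]]; [lia | auto]. Qed.

Lemma precedes_irrefl q w : ~ precedes q w w.
Proof. intros [H | [_ H]]; [lra | exact (alph_lt_irrefl w H)]. Qed.

Lemma base_value_cons q i w : base_value q (i :: w) = q i * base_value q w.
Proof. reflexivity. Qed.

Fixpoint suffixes_after (i : nat) (l : list (list nat)) : list (list nat) :=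
  match l with
  | nil => nil
  | nil :: l' => suffixes_after i l'
  | (j :: v) :: l' =>
      if Nat.eq_dec i j then v :: suffixes_after i l' else suffixes_after i l'
  end.

Lemma in_suffixes_after i v l : In v (suffixes_after i l) <-> In (i :: v) l.
Proof.
  induction l as [| [| j u] l IH]; simpl; [tauto | |].
  - rewrite IH; intuition discriminate.
  - destruct (Nat.eq_dec i j); simpl; rewrite IH; intuition congruence.
Qed.

Lemma NoDup_suffixes_after i l : NoDup l -> NoDup (suffixes_after i l).
Proof.
  induction 1 as [| [| j u] l Hu Hl IH]; simpl; [constructor | exact IH |].
  destruct (Nat.eq_dec i j) as [<- | _]; [| exact IH].
  constructor; [| exact IH]; now rewrite in_suffixes_after.
Qed.

Lemma length_split_first_letter n l :
  (forall w, In w l -> is_word (S n) w) ->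
  INR (length l) = INR (count_occ (list_eq_dec Nat.eq_dec) l nil) +
    sum_f_R0 (fun i => INR (length (suffixes_after i l))) n.
Proof.
  induction l as [| [| j v] l IH]; intros Hl.
  - simpl; rewrite sum_cte; lra.
  - rewrite count_occ_cons_eq by reflexivity; cbn [length suffixes_after].
    rewrite !S_INR, IH by (intros; apply Hl; now right); lra.
  - assert (Hj : (j <= n)%nat) by (assert (H := Hl _ (or_introl eq_refl));
      inversion H; lia).
    rewrite count_occ_cons_neq by discriminate; cbn [length suffixes_after].
    rewrite (sum_eq _ (fun i => INR (length (suffixes_after i l)) +
               (if Nat.eq_dec i j then 1 else 0))).
    + rewrite plus_sum, sum_f_R0_indicator, S_INR, IH by
        (auto; intros; apply Hl; now right); lra.
    + intros i _; destruct (Nat.eq_dec i j); cbn [length]; rewrite ?S_INR; lra.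
Qed.

Lemma glue_first_letters (P : nat -> list nat -> Prop) (c : nat -> R) n :
  (forall i, (i <= n)%nat ->
     exists m, NoDup m /\ (forall v, In v m -> P i v) /\ c i <= INR (length m)) ->
  exists m, NoDup m /\
    (forall w, In w m -> exists i v, (i <= n)%nat /\ w = i :: v /\ P i v) /\
    sum_f_R0 c n <= INR (length m).
Proof.
  assert (cons_inj : forall i : nat, Injective (cons i)) by
    (intros i u v H; now injection H).
  induction n as [| n IH]; intros Hc.
  - destruct (Hc 0%nat (le_n 0)) as (m & Hm & HP & Hlen).
    exists (map (cons 0%nat) m); split; [| split].
    + now apply Injective_map_NoDup.
    + intros w (v & <- & Hv)%in_map_iff; exists 0%nat, v; auto.
    + now rewrite length_map.
  - destruct IH as (m & Hm & HP & Hlen); [intros; apply Hc; lia |].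
    destruct (Hc (S n) (le_n _)) as (m' & Hm' & HP' & Hlen').
    exists (m ++ map (cons (S n)) m'); split; [| split].
    + apply NoDup_app; [exact Hm | now apply Injective_map_NoDup |].
      intros w Hw (v & <- & _)%in_map_iff.
      destruct (HP _ Hw) as (i & u & Hi & [= Hhead _] & _); lia.
    + intros w [Hw | (v & <- & Hv)%in_map_iff]%in_app_or.
      * destruct (HP _ Hw) as (i & u & Hi & -> & Hu); exists i, u; auto.
      * exists (S n), v; auto.
    + rewrite length_app, length_map, plus_INR; simpl; lra.
Qed.

Section SelfSimilarCount.

Variables (n : nat) (q p : nat -> R) (R0 : R) (phi : R -> R).

Hypothesis q_pos : forall i, (i <= n)%nat -> 0 < q i.
Hypothesis q_le_1 : forall i, (i <= n)%nat -> q i <= 1.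
Hypothesis phi_scale : forall i x, (i <= n)%nat -> 0 < x -> phi (x / q i) = phi x * p i.
Hypothesis phi_ge_1 : forall x, 0 < x <= 1 -> 1 <= phi x.
Hypothesis phi_le_1 : forall x, 1 <= x -> phi x <= 1.
Hypothesis p_nonneg : forall i, (i <= n)%nat -> 0 <= p i.
Hypothesis R0_p_le_1 : forall i, (i <= n)%nat -> R0 * p i <= 1.
Hypothesis sum_p : sum_f_R0 p n = 1.
Hypothesis R0_gt_1 : 1 < R0.
Hypothesis n_pos : (0 < n)%nat.

Lemma base_value_in_01 w : is_word (S n) w -> 0 < base_value q w <= 1.
Proof.
  induction 1 as [| i w Hi _ [Hw0 Hw1]]; simpl; [lra |].
  assert (0 < q i) by (apply q_pos; lia); assert (q i <= 1) by (apply q_le_1; lia).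
  split; [nra |]. rewrite <- (Rmult_1_r 1); apply Rmult_le_compat; lra.
Qed.

Lemma count_words_above_upper k x l : 0 < x <= 1 -> NoDup l ->
  (forall w, In w l -> is_word (S n) w /\ (length w < k)%nat /\ x <= base_value q w) ->
  INR (length l) <= (R0 * phi x - 1) / (R0 - 1).
Proof.
  revert x l; induction k as [| k IH]; intros x l Hx Hl Hmem.
  { destruct l as [| w l]; [| destruct (Hmem w (or_introl eq_refl)) as (_ & Hw & _); lia].
    pose proof (phi_ge_1 x Hx); simpl; apply Rle_mult_inv_pos; nra. }
  set (c := R0 * (phi x - 1) / (R0 - 1)).
  assert (Hc : 0 <= c) by (pose proof (phi_ge_1 x Hx); apply Rle_mult_inv_pos; nra).
  assert (Hsuff : forall i, (i <= n)%nat -> INR (length (suffixes_after i l)) <= p i * c).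
  { intros i Hi; pose proof (q_pos i Hi); pose proof (p_nonneg i Hi).
    assert (Hmem_i : forall u, In u (suffixes_after i l) ->
      is_word (S n) u /\ (length u < k)%nat /\ x / q i <= base_value q u).
    { intros u Hu%in_suffixes_after; destruct (Hmem _ Hu) as (Hw & Hlen & Hbase).
      inversion Hw; subst; simpl in Hlen.
      rewrite base_value_cons, <- Rdiv_le_iff in Hbase by lra; repeat split; auto; lia. }
    destruct (suffixes_after i l) as [| v l'] eqn:E; [simpl; nra |].
    destruct (Hmem_i v (or_introl eq_refl)) as (Hv & _ & Hxv).
    pose proof (base_value_in_01 v Hv).
    eapply Rle_trans; [apply (IH (x / q i)) |].
    - split; [apply Rdiv_lt_0_compat |]; lra.
    - rewrite <- E; now apply NoDup_suffixes_after.
    - exact Hmem_i.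
    - rewrite phi_scale by (auto; lra); unfold c.
      pose proof (R0_p_le_1 i Hi).
      apply Rmult_le_reg_r with (R0 - 1); [lra |].
      field_simplify; [nra | lra | lra]. }
  rewrite (length_split_first_letter n l) by (intros w Hw; apply Hmem, Hw).
  assert (Hnil : (count_occ (list_eq_dec Nat.eq_dec) l nil <= 1)%nat) by
    now apply NoDup_count_occ.
  apply le_INR in Hnil.
  apply sum_Rle in Hsuff; rewrite <- scal_sum, sum_p in Hsuff.
  apply Rle_trans with (1 + c); [simpl in Hnil; lra |].
  unfold c; apply Req_le; field; lra.
Qed.

Lemma count_words_above_lower k x : 0 < x -> phi x <= R0 ^ k ->
  exists m, NoDup m /\ (forall w, In w m -> is_word (S n) w /\ x < base_value q w) /\
    (phi x - 1) / INR n <= INR (length m).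
Proof.
  assert (Hn : 1 <= INR n) by (apply (le_INR 1); lia).
  assert (Hsmall : forall x, phi x <= 1 ->
    exists m, NoDup m /\ (forall w, In w m -> is_word (S n) w /\ x < base_value q w) /\
      (phi x - 1) / INR n <= INR (length m)).
  { intros y Hy; exists nil; split; [apply NoDup_nil | split; [simpl; tauto |]].
    assert (0 < / INR n) by (apply Rinv_0_lt_compat; lra); simpl; unfold Rdiv; nra. }
  (* Each first letter divides [phi] by at least [R0], so [k] bounds the recursion depth. *)
  revert x; induction k as [| k IH]; intros x Hx Hphi; [apply Hsmall; simpl in Hphi; lra |].
  destruct (Rle_dec (phi x) 1) as [Hle | Hgt]; [now apply Hsmall |].
  destruct (Rlt_le_dec x 1) as [Hx1 | Hx1]; [| pose proof (phi_le_1 x Hx1); lra].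
  destruct (glue_first_letters
              (fun i v => is_word (S n) v /\ x / q i < base_value q v)
              (fun i => (phi x * p i - 1) / INR n) n) as (m & Hm & HP & Hlen).
  { intros i Hi; pose proof (q_pos i Hi); pose proof (R0_p_le_1 i Hi).
    pose proof (p_nonneg i Hi).
    destruct (IH (x / q i)) as (m & Hm & HP & Hlen); [apply Rdiv_lt_0_compat; lra | |].
    - rewrite phi_scale by (auto; lra); simpl in Hphi.
      apply Rle_trans with (R0 * R0 ^ k * p i); [nra |].
      pose proof (pow_le R0 k ltac:(lra)); nra.
    - exists m; split; [exact Hm | split; [exact HP |]].
      rewrite phi_scale in Hlen by (auto; lra); exact Hlen. }
  exists (nil :: m); split; [| split].
  - constructor; [| exact Hm].
    intros (i & v & _ & [=] & _)%HP.
  - intros w [<- | (i & v & Hi & -> & Hv & Hxv)%HP]; [split; [constructor | simpl; lra] |].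
    split; [constructor; [lia | assumption] |].
    rewrite base_value_cons, <- Rdiv_lt_iff by (apply q_pos; lia); exact Hxv.
  - assert (Hsum : sum_f_R0 (fun i => (phi x * p i - 1) / INR n) n =
                    (phi x - INR (S n)) / INR n).
    { rewrite (sum_eq _ (fun i => p i * (phi x / INR n) - / INR n)),
        minus_sum, <- scal_sum, sum_p, sum_cte by (intros; field; lra).
      field; lra. }
    rewrite Hsum in Hlen; simpl length; rewrite !S_INR in *.
    replace ((phi x - 1) / INR n) with ((phi x - (INR n + 1)) / INR n + 1)
      by (field; lra); lra.
Qed.

Lemma rank_upper_bound w r : is_word (S n) w -> has_rank (S n) q w r ->
  INR r <= (R0 * phi (base_value q w) - 1) / (R0 - 1).
Proof.
  intros Hw (l & Hl & Hprec & ->).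
  set (k := S (list_max (map (@length nat) (w :: l)))).
  change (S (length l)) with (length (w :: l)).
  apply (count_words_above_upper k); [now apply base_value_in_01 | |].
  - constructor; [| exact Hl].
    intros Hin%Hprec; exact (precedes_irrefl q w (proj2 Hin)).
  - intros v Hv; split; [| split].
    + destruct Hv as [<- | Hv%Hprec]; tauto.
    + pose proof (proj1 (list_max_le (map (@length nat) (w :: l)) _) (le_n _)) as Hmax.
      rewrite Forall_forall in Hmax; specialize (Hmax _ (in_map _ _ _ Hv)); unfold k; lia.
    + destruct Hv as [<- | [_ [Hlt | [Heq _]]]%Hprec]; lra.
Qed.

Lemma rank_lower_bound w r : is_word (S n) w -> has_rank (S n) q w r ->
  phi (base_value q w) / INR n <= INR r.
Proof.
  intros Hw (l & Hl & Hprec & ->).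
  set (y := base_value q w).
  assert (Hy : 0 < y <= 1) by now apply base_value_in_01.
  assert (Hn : 1 <= INR n) by (apply (le_INR 1); lia).
  destruct (Pow_x_infinity R0 ltac:(rewrite Rabs_right; lra) (phi y)) as [k Hk].
  specialize (Hk k (le_n k)); rewrite Rabs_right in Hk by (left; apply pow_lt; lra).
  destruct (count_words_above_lower k y) as (m & Hm & Hmem & Hlen); [lra | lra |].
  assert (Hml : (length m <= length l)%nat).
  { apply NoDup_incl_length; [exact Hm |].
    intros v Hv; apply Hprec; destruct (Hmem v Hv); split; [assumption | now left]. }
  apply le_INR in Hml; rewrite S_INR.
  assert (phi y / INR n <= 1 + (phi y - 1) / INR n); [| lra].
  apply Rmult_le_reg_r with (INR n); [lra |]; field_simplify; lra.
Qed.

End SelfSimilarCount.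

Definition alpha (q : nat -> R) (i : nat) : R := ln (q i) / ln (q 0%nat).

Section MonkeyKeyboard.

Variables (n : nat) (q : nat -> R) (s R0 : R).

Hypothesis n_pos : (0 < n)%nat.
Hypothesis s_pos : 0 < s.
Hypothesis q_pos : forall i, (i < S n)%nat -> 0 < q i.
Hypothesis q_mono : forall i, (S i < S n)%nat -> q (S i) <= q i.
Hypothesis q_sum : sum_f_R0 q n + s = 1.
Hypothesis R0_pos : 0 < R0.
Hypothesis R0_root : sum_f_R0 (fun i => Rpower R0 (- alpha q i)) n = 1.

Lemma q_le_q0 i : (i <= n)%nat -> q i <= q 0%nat.
Proof.
  induction i as [| i IH]; intros Hi; [lra |].
  specialize (q_mono i ltac:(lia)); specialize (IH ltac:(lia)); lra.
Qed.

Lemma q0_lt_1 : q 0%nat < 1.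
Proof.
  enough (q 0%nat <= sum_f_R0 q n) by lra.
  apply sum_f_R0_ge_first; intros i Hi; apply Rlt_le, q_pos; lia.
Qed.

Lemma ln_q0_neg : ln (q 0%nat) < 0.
Proof.
  rewrite <- ln_1; apply ln_increasing; [apply q_pos; lia | exact q0_lt_1].
Qed.

Lemma alpha_ge_1 i : (i <= n)%nat -> 1 <= alpha q i.
Proof.
  intros Hi; unfold alpha.
  assert (ln (q i) <= ln (q 0%nat)) by (apply ln_le; [apply q_pos | apply q_le_q0]; lia).
  pose proof ln_q0_neg.
  assert (ln (q i) / ln (q 0%nat) * ln (q 0%nat) = ln (q i)) by (field; lra); nra.
Qed.

Lemma R0_gt_1 : 1 < R0.
Proof.
  destruct (Rlt_le_dec 1 R0) as [H | H]; [exact H | exfalso].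
  assert (INR (S n) <= sum_f_R0 (fun i => Rpower R0 (- alpha q i)) n).
  { rewrite <- (Rmult_1_l (INR (S n))), <- sum_cte; apply sum_Rle.
    intros i Hi; apply Rpower_ge_1; [lra |]; pose proof (alpha_ge_1 i Hi); lra. }
  assert (2 <= INR (S n)) by (apply (le_INR 2); lia); lra.
Qed.

Lemma ln_R0_div_ln_q0_neg : ln R0 / ln (q 0%nat) < 0.
Proof.
  assert (0 < ln R0) by (rewrite <- ln_1; apply ln_increasing; [lra | exact R0_gt_1]).
  pose proof ln_q0_neg; unfold Rdiv; apply Rmult_pos_neg; [lra | now apply Rinv_lt_0_compat].
Qed.

Lemma Rpower_div_q i x : (i <= n)%nat -> 0 < x ->
  Rpower (x / q i) (ln R0 / ln (q 0%nat)) =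
  Rpower x (ln R0 / ln (q 0%nat)) * Rpower R0 (- alpha q i).
Proof.
  intros Hi Hx; assert (0 < q i) by (apply q_pos; lia); pose proof ln_q0_neg.
  unfold Rpower, alpha, Rdiv; rewrite <- exp_plus; f_equal.
  rewrite ln_mult, ln_Rinv by (auto using Rinv_0_lt_compat); field; lra.
Qed.

Lemma R0_mul_weight_le_1 i : (i <= n)%nat -> R0 * Rpower R0 (- alpha q i) <= 1.
Proof.
  intros Hi; pose proof R0_gt_1; pose proof (alpha_ge_1 i Hi).
  rewrite <- (Rpower_1 R0) at 1 by lra; rewrite <- Rpower_plus.
  apply Rpower_le_1; lra.
Qed.

Lemma monkey_rank_bounds w r : is_word (S n) w -> has_rank (S n) q w r ->
  Rpower (base_value q w) (ln R0 / ln (q 0%nat)) / INR n <= INR r /\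
  INR r <= (R0 * Rpower (base_value q w) (ln R0 / ln (q 0%nat)) - 1) / (R0 - 1).
Proof.
  assert (q_pos_le : forall i, (i <= n)%nat -> 0 < q i) by (intros; apply q_pos; lia).
  assert (q_le_1 : forall i, (i <= n)%nat -> q i <= 1) by
    (intros i Hi; pose proof (q_le_q0 i Hi); pose proof q0_lt_1; lra).
  assert (weight_nonneg : forall i, (i <= n)%nat -> 0 <= Rpower R0 (- alpha q i)) by
    (intros; left; apply exp_pos).
  pose proof ln_R0_div_ln_q0_neg.
  assert (phi_ge_1 : forall x, 0 < x <= 1 -> 1 <= Rpower x (ln R0 / ln (q 0%nat))) by
    (intros; apply Rpower_ge_1; lra).
  assert (phi_le_1 : forall x, 1 <= x -> Rpower x (ln R0 / ln (q 0%nat)) <= 1) by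
    (intros; apply Rpower_le_1; lra).
  intros Hw Hr; split.
  - apply (rank_lower_bound n q (fun i => Rpower R0 (- alpha q i)) R0
      (fun x => Rpower x (ln R0 / ln (q 0%nat))));
      auto using Rpower_div_q, R0_mul_weight_le_1, R0_gt_1.
  - apply (rank_upper_bound n q (fun i => Rpower R0 (- alpha q i)) R0
      (fun x => Rpower x (ln R0 / ln (q 0%nat))));
      auto using Rpower_div_q, R0_mul_weight_le_1, R0_gt_1.
Qed.

End MonkeyKeyboard.

Theorem mainTheorem1
  (K : nat) (q : nat -> R) (s R0 : R)
  (hK : (2 <= K)%nat)
  (hs : 0 < s < 1)
  (hqpos : forall i, (i < K)%nat -> 0 < q i)
  (hqmono : forall i, (S i < K)%nat -> q (S i) <= q i)
  (hsum : sum_f_R0 q (K - 1) + s = 1)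
  (hR0pos : 0 < R0)
  (hR0 : sum_f_R0 (fun i => Rpower R0 (- (ln (q i) / ln (q 0%nat)))) (K - 1) = 1) :
  exists b : R, 0 < b < 1 /\
    forall (w : list nat) (r : nat),
      is_word K w -> has_rank K q w r ->
      b / R0 * Rpower (base_value q w) (ln R0 / ln (q 0%nat)) < INR r /\
      INR r < R0 / (R0 - 1) * Rpower (base_value q w) (ln R0 / ln (q 0%nat)).
Proof.
  destruct K as [| n]; [lia |].
  replace (S n - 1)%nat with n in hsum, hR0 by lia.
  assert (n_pos : (0 < n)%nat) by lia.
  assert (Hn : 1 <= INR n) by (apply (le_INR 1); lia).
  destruct hs as [s_pos _].
  pose proof (R0_gt_1 n q s R0 n_pos s_pos hqpos hqmono hsum hR0pos hR0) as hR.
  exists (/ INR (S n)); split.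
  { rewrite S_INR; split; [apply Rinv_0_lt_compat; lra |].
    rewrite <- Rinv_1; apply Rinv_lt_contravar; lra. }
  intros w r Hw Hr.
  destruct (monkey_rank_bounds n q s R0 n_pos s_pos hqpos hqmono hsum hR0pos hR0 w r Hw Hr)
    as [Hlower Hupper].
  set (y := Rpower (base_value q w) (ln R0 / ln (q 0%nat))) in *.
  assert (Hy : 0 < y) by apply exp_pos.
  split; [eapply Rlt_le_trans; [| exact Hlower] | eapply Rle_lt_trans; [exact Hupper |]].
  - assert (HSn : INR n < INR (S n) * R0) by (rewrite S_INR; nra).
    replace (/ INR (S n) / R0 * y) with (y * / (INR (S n) * R0))
      by (rewrite S_INR in *; field; lra).
    apply Rmult_lt_compat_l; [exact Hy |]; apply Rinv_lt_contravar; nra.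
  - apply Rmult_lt_reg_r with (R0 - 1); [lra |]; field_simplify; lra.
Qed.
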